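(* Let $\mathcal U$ be any nonprincipal ultrafilter on $\mathbb{N}$. There exists $r\in({}^{\star}\mathbb{R}_{\mathcal F})_F$ such that $i(r)=0$ in $\mathbb{R}_{\mathcal F}^{\circ}$ and $j(r)\neq 0$ in ${}^{\star}\mathbb{R}$.
   Context: $\mathcal F$ is the Fréchet filter of cofinite subsets of $\mathbb{N}$. Henle's ring ${}^{\star}\mathbb{R}_{\mathcal F}=\mathbb{R}^{\mathbb{N}}/\mathcal F$: classes $[x]_{\mathcal F}$ of real sequences identified when equal for all but finitely many $n$, with pointwise operations and order $[x]_{\mathcal F}\le[y]_{\mathcal F}$ iff $\{n:x_n\le y_n\}\in\mathcal F$; $({}^{\star}\mathbb{R}_{\mathcal F})_F$ is its subring of finite elements ($-n\le r\le n$ for some $n\in\mathbb{N}$). ${}^{\star}\mathbb{R}=\mathbb{R}^{\mathbb{N}}/\mathcal U$ is the hyperreal field (sequences identified when they agree on a set in $\mathcal U$). With $\mathbb{R}^{\mathbb{N}}_B$ the ring of bounded real sequences and $o=\{f\in\mathbb{R}^{\mathbb{N}}:\lim_{n\to\infty}nf(n)=0\}$ (an ideal of $\mathbb{R}^{\mathbb{N}}_B$), $\mathbb{R}_{\mathcal F}^{\circ}=\mathbb{R}^{\mathbb{N}}_B/o$. The homomorphisms are $i:({}^{\star}\mathbb{R}_{\mathcal F})_F\to\mathbb{R}_{\mathcal F}^{\circ}$, $i([x]_{\mathcal F})=[x]_o$, and $j:{}^{\star}\mathbb{R}_{\mathcal F}\to{}^{\star}\mathbb{R}$, $j([x]_{\mathcal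 F})=[x]_{\mathcal U}$. *)

From Stdlib Require Import Reals.
Open Scope R_scope.

Definition cofinite (A : nat -> Prop) : Prop :=
  exists N : nat, forall n : nat, (N <= n)%nat -> A n.

(* Frechet filter equivalence: x =_F y iff they agree for all but finitely many n. *)
Definition eqF (x y : nat -> R) : Prop := cofinite (fun n => x n = y n).

Definition finiteF (x : nat -> R) : Prop :=
  exists k : nat, cofinite (fun n => - INR k <= x n <= INR k).

Definition bounded_seq (f : nat -> R) : Prop :=
  exists M : R, forall n : nat, Rabs (f n) <= M.

Definition in_o (f : nat -> R) : Prop := Un_cv (fun n => INR n * f n) 0.

Definition is_ultrafilter (U : (nat -> Prop) -> Prop) : Prop :=
  U (fun _ => True) /\
  ~ U (fun _ => False) /\
  (forall A B : nat -> Prop, U A -> (forall n, A n -> B n) -> U B) /\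
  (forall A B : nat -> Prop, U A -> U B -> U (fun n => A n /\ B n)) /\
  (forall A : nat -> Prop, U A \/ U (fun n => ~ A n)).

Definition nonprincipal (U : (nat -> Prop) -> Prop) : Prop :=
  forall m : nat, ~ U (fun n => n = m).

(* i([x]_F) = 0 in R_F^o : every bounded representative of [x]_F lies in o. *)
Definition i_zero (x : nat -> R) : Prop :=
  forall y : nat -> R, bounded_seq y -> eqF x y -> in_o y.

(* j([x]_F) = [x]_U = 0 in *R : x agrees with 0 on a set in U. *)
Definition j_zero (U : (nat -> Prop) -> Prop) (x : nat -> R) : Prop :=
  U (fun n => x n = 0).

(* Take r = [1/(n+1)^2]_F.  It is bounded by 1, and n r_n <= 1/(n+1) tends to 0, so r lies in
   the ideal o; since membership in o only depends on the F-class, i(r) = 0.  But r_n never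
   vanishes, so its zero set is empty and cannot belong to a proper filter: j(r) <> 0. *)
From Stdlib Require Import Reals Lra Lia.
Open Scope R_scope.

Lemma Un_cv_eventually_ext (u v : nat -> R) (l : R) :
  cofinite (fun n => u n = v n) -> Un_cv u l -> Un_cv v l.
Proof.
  intros [N0 HN0] Hu eps Heps.
  destruct (Hu eps Heps) as [N HN].
  exists (Nat.max N0 N); intros n Hn.
  rewrite <- HN0 by lia.
  apply HN; lia.
Qed.

Lemma Un_cv_0_dominated (u v : nat -> R) :
  (forall n, Rabs (u n) <= v n) -> Un_cv v 0 -> Un_cv u 0.
Proof.
  intros Huv Hv eps Heps.
  destruct (Hv eps Heps) as [N HN].
  exists N; intros n Hn.
  specialize (HN n Hn); specialize (Huv n).
  unfold R_dist in *; rewrite Rminus_0_r in *.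
  apply Rle_lt_trans with (Rabs (v n)); [|exact HN].
  rewrite (Rabs_right (v n)); [exact Huv|].
  apply Rle_ge, Rle_trans with (Rabs (u n)); [apply Rabs_pos | exact Huv].
Qed.

Lemma cv_infty_INR_succ : cv_infty (fun n => INR n + 1).
Proof.
  intros M.
  destruct (INR_unbounded M) as [N HN].
  exists N; intros n Hn.
  apply le_INR in Hn; lra.
Qed.

Lemma Un_cv_inv_INR_succ : Un_cv (fun n => / (INR n + 1)) 0.
Proof. exact (cv_infty_cv_0 _ cv_infty_INR_succ). Qed.

Lemma finiteF_of_bounded (x : nat -> R) : bounded_seq x -> finiteF x.
Proof.
  intros [M HM].
  destruct (INR_unbounded M) as [k Hk].
  exists k, 0%nat; intros n _.
  specialize (HM n).
  pose proof (Rle_abs (x n)); pose proof (Rle_abs (- x n)).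
  rewrite Rabs_Ropp in *; lra.
Qed.

Lemma in_o_eqF (x y : nat -> R) : eqF x y -> in_o x -> in_o y.
Proof.
  intros [N HN].
  apply Un_cv_eventually_ext.
  exists N; intros n Hn; rewrite HN by exact Hn; reflexivity.
Qed.

Lemma i_zero_of_in_o (x : nat -> R) : in_o x -> i_zero x.
Proof. intros Hx y _ Hxy; exact (in_o_eqF x y Hxy Hx). Qed.

Lemma not_j_zero_of_nonvanishing (U : (nat -> Prop) -> Prop) (x : nat -> R) :
  is_ultrafilter U -> (forall n, x n <> 0) -> ~ j_zero U x.
Proof.
  intros [_ [Hproper [Hmono _]]] Hx HU.
  apply Hproper, (Hmono _ _ HU).
  intros n Hn; exact (Hx n Hn).
Qed.

Definition inv_sq_succ (n : nat) : R := / (INR n + 1) ^ 2.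

Lemma inv_sq_succ_pos (n : nat) : 0 < inv_sq_succ n.
Proof.
  pose proof (pos_INR n).
  apply Rinv_0_lt_compat; nra.
Qed.

Lemma bounded_inv_sq_succ : bounded_seq inv_sq_succ.
Proof.
  exists 1; intros n.
  pose proof (pos_INR n); pose proof (inv_sq_succ_pos n).
  rewrite Rabs_right by lra.
  unfold inv_sq_succ; rewrite <- Rinv_1.
  apply Rinv_le_contravar; nra.
Qed.

Lemma INR_mul_inv_sq_succ_le (n : nat) : INR n * inv_sq_succ n <= / (INR n + 1).
Proof.
  pose proof (pos_INR n).
  unfold inv_sq_succ.
  replace (/ (INR n + 1)) with ((INR n + 1) * / (INR n + 1) ^ 2) by (field; lra).
  apply Rmult_le_compat_r; [left; apply Rinv_0_lt_compat; nra | lra].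
Qed.

Lemma in_o_inv_sq_succ : in_o inv_sq_succ.
Proof.
  apply Un_cv_0_dominated with (v := fun n => / (INR n + 1)); [|exact Un_cv_inv_INR_succ].
  intros n.
  pose proof (pos_INR n); pose proof (inv_sq_succ_pos n).
  rewrite Rabs_right by nra.
  apply INR_mul_inv_sq_succ_le.
Qed.

Theorem mainTheorem6 (U : (nat -> Prop) -> Prop) :
  is_ultrafilter U -> nonprincipal U ->
  exists x : nat -> R, finiteF x /\ i_zero x /\ ~ j_zero U x.
Proof.
  intros HU _.
  exists inv_sq_succ.
  split; [|split].
  - exact (finiteF_of_bounded _ bounded_inv_sq_succ).
  - exact (i_zero_of_in_o _ in_o_inv_sq_succ).
  - apply not_j_zero_of_nonvanishing; [exact HU|].
    intros n; apply Rgt_not_eq, inv_sq_succ_pos.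
Qed.
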